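(* For every finite alphabet $\Sigma$ and every family of boring extensions $\mathcal E$ over $\Sigma$, the quintuple $(\Sigma^{<\omega},\sqsubseteq,\Sigma,\mathcal S,\mathcal M_{\mathcal E})$ is an $(\mathcal S,\mathcal M)$-tree.
   Context: A tree is a partially ordered set $(T,\preceq)$ such that for every $a\in T$ the set $\{b\in T:b\prec a\}$ is finite and linearly ordered by $\preceq$. The level of $a$ is $\ell(a)=|\{b\in T:b\prec a\}|$; $T(n)=\{a\in T:\ell(a)=n\}$, and $T(\le n)$, $T(<n)$ are defined analogously. A node $b$ is an immediate successor of $a$ if $a\prec b$ and there is no $c$ with $a\prec c\prec b$. An $\mathcal S$-tree is a quadruple $(T,\preceq,\Sigma,\mathcal S)$ where $(T,\preceq)$ is a countable tree in which every node has finitely many immediate successors and $T(0)$ is finite, $\Sigma$ is a set, and $\mathcal S\colon T\times T^{<\omega}\times\Sigma\to T$ is a partial function such that: (S1) if $\mathcal S(a,\bar p,c)$ is defined then it is an immediate successor of $a$ and every entry of $\bar p$ has level at most $\ell(a)-1$; (S2) if $\mathcal S(a,\bar p,c)=\mathcal S(b,\bar q,d)$ then $a=b$, $\bar p=\bar q$ and $c=d$; (S3) for every $a\in T$ and every immediate successor $b$ of $a$ there are $\bar p\in T^{<\omega}$ and $c\in\Sigma$ with $b=\mathcal S(a,\bar p,c)$. For $S\subseteq T$, a map $f\colon S\to T$ is level-preserving if $\ell(a)=\ell(b)$ implies $\ell(f(a))=\ell(f(b))$; then $\tilde f(n)$ denotes $\ell(f(a))$ for any $a\in S$ with $\ell(a)=n$.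 An injection $F\colon T\to T$ is shape-preserving if (i) it is level-preserving; (ii) whenever $\mathcal S(a,\bar p,c)$ is defined, $\mathcal S(F(a),F(\bar p),c)$ is defined and $\mathcal S(F(a),F(\bar p),c)\preceq F(\mathcal S(a,\bar p,c))$, where $F(\bar p)$ is the tuple of images of the entries of $\bar p$; (iii) for every $a\in T(0)$ and $b\in T$ with $a\preceq b$ we have $a\preceq F(b)$. A shape-preserving $F$ skips level $m$ if $m\notin\tilde F[\omega]$, and skips only level $m$ if $\tilde F[\omega]=\omega\setminus\{m\}$. An $(\mathcal S,\mathcal M)$-tree is a quintuple $(T,\preceq,\Sigma,\mathcal S,\mathcal M)$ where $(T,\preceq,\Sigma,\mathcal S)$ is an $\mathcal S$-tree and $\mathcal M$ is a set of shape-preserving functions $T\to T$ such that: (M1) $\mathrm{Id}_T\in\mathcal M$, $\mathcal M$ is closed under composition, and whenever $(F_i)_{i\in\omega}$ is a sequence in $\mathcal M$ with $F_i\restriction T(\le i)=F_{i+1}\restriction T(\le i)$ for all $i$, there is $F_\infty\in\mathcal M$ with $F_\infty\restriction T(\le i)=F_i\restriction T(\le i)$ for all $i$; (M2) for every $n\in\omega$ and every $F\in\mathcal M$ with $\tilde F(n)>0$ which skips level $\tilde F(n)-1$, there are $F_1,F_2\in\mathcal M$ such that $F_2$ skips only level $\tilde F(n)-1$ and $(F_2\circ F_1)\restriction T(\le n)=F\restriction T(\le n)$; (M3) for all $n<m$ in $\omega$ there is $F^n_m\in\mathcal M$ skipping only level $m$ such that $F^n_m(b)=\mathcal S(b,\bar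 p,c)$ whenever $a\in T(n)$, $b\in T(m)$, $\bar p\in T^{<\omega}$, $c\in\Sigma$, $\mathcal S(a,\bar p,c)$ is defined and $\mathcal S(a,\bar p,c)\preceq b$. Words: $\Sigma^{<\omega}$ is the set of finite words over the finite alphabet $\Sigma$, ordered by $\sqsubseteq$ (initial segment); the level of a word is its length. For a word $w$ and $i<|w|$, $w_i$ is its letter at index $i$ (indices start at $0$), $w|_\ell$ is its initial segment of length $\ell\le|w|$, and $u^\frown v$ denotes concatenation. The successor operation $\mathcal S$ on $\Sigma^{<\omega}$ is defined only for empty parameter tuples, by $\mathcal S(a,(),c)=a^\frown c$. A family of boring extensions over $\Sigma$ is a sequence $\mathcal E=(\mathcal E_n)_{n\in\omega}$ with $\mathcal E_n$ a set of functions $\Sigma^n\to\Sigma$ such that: (B1) for all $m<n$, the function $e^n_m\colon\Sigma^n\to\Sigma$, $e^n_m(a)=a_m$, lies in $\mathcal E_n$; (B2) for all $m\le n$, $e_1\in\mathcal E_m$, $e_2\in\mathcal E_n$ there is $e_3\in\mathcal E_{n+1}$ with $e_3(a^\frown e_1(a)^\frown b)=e_2(a^\frown b)$ for all $a\in\Sigma^m$, $b\in\Sigma^{n-m}$. For $X\subseteq\Sigma^{<\omega}$, the set of interesting levels $I_{\mathcal E}(X)$ is the set of all $\ell\in\omega$ for which there is no $e\in\mathcal E_\ell$ such that $(a|_\ell)^\frown e(a|_\ell)\sqsubseteq a$ for every $a\in X$ with $|a|\ge\ell$. $\mathcal M_{\mathcal E}$ is the set of all shape-preserving $F\colon\Sigma^{<\omega}\to\Sigma^{<\omega}$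 with $I_{\mathcal E}(F[\Sigma^{<\omega}])=\tilde F[\omega]$. *)

From mathcomp Require Import all_boot.
From Stdlib Require List.
Set Implicit Arguments. Unset Strict Implicit. Unset Printing Implicit Defensive.

Section Trees.
Variables (T : Type) (le : T -> T -> Prop).

Definition tlt (a b : T) : Prop := le a b /\ a <> b.

Definition is_tree : Prop :=
  (forall a, le a a) /\
  (forall a b, le a b -> le b a -> a = b) /\
  (forall a b c, le a b -> le b c -> le a c) /\
  (forall a, exists l : list T, List.NoDup l /\ (forall b, tlt b a <-> List.In b l)) /\
  (forall a b c, tlt b a -> tlt c a -> le b c \/ le c b).

Definition has_level (a : T) (n : nat) : Prop :=
  exists l : list T, List.NoDup l /\ (forall b, tlt b a <-> List.In b l)
                     /\ List.length l = n.

Definition imm_succ (a b : T) : Prop :=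
  tlt a b /\ ~ (exists c, tlt a c /\ tlt c b).

Definition countable_type : Prop := exists f : T -> nat, injective f.

Variables (Sig : Type) (S : T -> seq T -> Sig -> option T).

Definition is_S_tree : Prop :=
  is_tree /\ countable_type /\
  (forall a, exists l : list T, forall b, imm_succ a b -> List.In b l) /\
  (exists l : list T, forall a, has_level a 0 -> List.In a l) /\
  (forall a p c b, S a p c = Some b ->
     imm_succ a b /\
     (forall q, List.In q p -> forall k la, has_level q k -> has_level a la ->
        k + 1 <= la)) /\
  (forall a b p q c d x, S a p c = Some x -> S b q d = Some x ->
     a = b /\ p = q /\ c = d) /\
  (forall a b, imm_succ a b -> exists p c, S a p c = Some b).

Definition level_preserving (F : T -> T) : Prop :=
  forall a b n k, has_level a n -> has_level b n ->
    has_level (F a) k -> has_level (F b) k.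

Definition tilde (F : T -> T) (n k : nat) : Prop :=
  exists a, has_level a n /\ has_level (F a) k.

Definition tilde_img (F : T -> T) (k : nat) : Prop :=
  exists n, tilde F n k.

Definition skips (F : T -> T) (m : nat) : Prop := ~ tilde_img F m.

Definition skips_only (F : T -> T) (m : nat) : Prop :=
  forall k, tilde_img F k <-> k <> m.

Definition shape_preserving (F : T -> T) : Prop :=
  injective F /\ level_preserving F /\
  (forall a p c b, S a p c = Some b ->
     exists b', S (F a) (map F p) c = Some b' /\ le b' (F b)) /\
  (forall a b, has_level a 0 -> le a b -> le a (F b)).

Definition agree_upto (i : nat) (F G : T -> T) : Prop :=
  forall a n, has_level a n -> n <= i -> F a = G a.

Definition is_SM_tree (M : (T -> T) -> Prop) : Prop :=
  is_S_tree /\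
  (forall F, M F -> shape_preserving F) /\
  (M id /\ (forall F G, M F -> M G -> M (F \o G)) /\
   (forall Fs : nat -> T -> T, (forall i, M (Fs i)) ->
      (forall i, agree_upto i (Fs i) (Fs i.+1)) ->
      exists Finf, M Finf /\ forall i, agree_upto i Finf (Fs i))) /\
  (forall n F k, M F -> tilde F n k -> 0 < k -> skips F (k - 1) ->
     exists F1 F2, M F1 /\ M F2 /\ skips_only F2 (k - 1) /\
       agree_upto n (F2 \o F1) F) /\
  (forall n m, n < m -> exists F, M F /\ skips_only F m /\
     forall a b p c x, has_level a n -> has_level b m -> S a p c = Some x ->
       le x b -> S b p c = Some (F b)).

End Trees.

Section Words.
Variable Sig : finType.

Definition word_le (u v : seq Sig) : Prop := prefix u v.

Definition word_S (a : seq Sig) (p : seq (seq Sig)) (c : Sig) : option (seq Sig) :=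
  if p is [::] then Some (rcons a c) else None.

Definition boring_ext (E : forall n, (n.-tuple Sig -> Sig) -> Prop) : Prop :=
  (forall m n (H : m < n), E n (fun a => tnth a (Ordinal H))) /\
  (forall m n (e1 : m.-tuple Sig -> Sig) (e2 : n.-tuple Sig -> Sig),
     m <= n -> E m e1 -> E n e2 ->
     exists e3 : n.+1.-tuple Sig -> Sig, E n.+1 e3 /\
       forall (a : m.-tuple Sig) (b : (n - m).-tuple Sig)
              (t : n.+1.-tuple Sig) (t' : n.-tuple Sig),
         val t = val a ++ e1 a :: val b -> val t' = val a ++ val b ->
         e3 t = e2 t').

Definition interesting (E : forall n, (n.-tuple Sig -> Sig) -> Prop)
    (X : seq Sig -> Prop) (l : nat) : Prop :=
  ~ exists e : l.-tuple Sig -> Sig, E l e /\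
      forall a, X a -> l <= size a ->
        forall t : l.-tuple Sig, val t = take l a ->
          prefix (rcons (val t) (e t)) a.

Definition M_E (E : forall n, (n.-tuple Sig -> Sig) -> Prop)
    (F : seq Sig -> seq Sig) : Prop :=
  shape_preserving word_le word_S F /\
  forall l, interesting E (fun w => exists v, w = F v) l <->
            tilde_img word_le F l.

End Words.

From mathcomp Require Import all_boot zify.
From Stdlib Require List Classical.
Set Implicit Arguments. Unset Strict Implicit. Unset Printing Implicit Defensive.

(* Words form an S-tree in which a shape-preserving map F is determined by its
   strictly increasing level map \tilde F together with the letters F writes at
   the levels it skips; F lies in M_E exactly when each of these letters is a
   boring extension of the prefix in front of it ([M_E_char]).  The witnesses of
   (M3) and the factor F2 of (M2) insert a single boring letter, F1 deletes the
   letter written at the skipped level, and the limit in (M1) is the diagonal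
   map a |-> F_|a| a.  Closure under composition rests on (B2): substituting the
   skipped letters one level at a time turns a boring function of the input of
   F into a boring function of its output ([boring_pullback]). *)

Lemma In_mem (T : eqType) (x : T) (s : seq T) : List.In x s <-> x \in s.
Proof.
elim: s => [|y s IH] //=; rewrite in_cons; split.
- by case=> [->|/IH ->]; rewrite ?eqxx ?orbT.
- by case/orP=> [/eqP ->|/IH]; [left|right].
Qed.

Lemma uniq_NoDup (T : eqType) (s : seq T) : uniq s -> List.NoDup s.
Proof.
elim: s => [|y s IH] /=; first by constructor.
case/andP=> ys us; constructor; last exact: IH.
by move/In_mem; apply/negP.
Qed.

Lemma length_size (T : Type) (s : seq T) : length s = size s.
Proof. by elim: s => //= y s ->. Qed.

Lemma prefix_antisym (T : eqType) (a b : seq T) : prefix a b -> prefix b a -> a = b.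
Proof.
move=> /prefixP [s ->] /size_prefix; rewrite size_cat.
by case: s => [|y s] /=; [rewrite cats0 | rewrite addnS ltnNge leq_addr].
Qed.

Lemma prefix_nth (T : eqType) (x0 : T) (u w : seq T) i :
  prefix u w -> i < size u -> nth x0 w i = nth x0 u i.
Proof. by case/prefixP=> s -> h; rewrite nth_cat h. Qed.

Lemma prefix_take_eq (T : eqType) (u w : seq T) i :
  prefix u w -> i <= size u -> take i w = take i u.
Proof. by case/prefixP=> s -> h; rewrite takel_cat. Qed.

Lemma prefix_common (T : eqType) (x0 : T) (p X Y : seq T) l :
  prefix p X -> prefix p Y -> l < size p ->
  nth x0 X l = nth x0 Y l /\ take l X = take l Y.
Proof.
move=> pX pY lt; rewrite (prefix_nth x0 pX lt) (prefix_nth x0 pY lt).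
by rewrite (prefix_take_eq pX (ltnW lt)) (prefix_take_eq pY (ltnW lt)).
Qed.

Lemma prefix_rcons_take_nth (T : eqType) (x0 : T) (w : seq T) l x :
  l < size w -> prefix (rcons (take l w) x) w = (nth x0 w l == x).
Proof.
move=> lt; have sl : size (take l w) = l by rewrite size_takel // ltnW.
rewrite prefixE size_rcons sl (take_nth x0 lt) eqseq_rcons eqxx.
by [].
Qed.

Lemma take_rcons_le (T : Type) n (s : seq T) x :
  n <= size s -> take n (rcons s x) = take n s.
Proof. by move=> h; rewrite -cats1 takel_cat. Qed.

Section WordTree.
Variable Sig : finType.
Notation word := (seq Sig).
Notation wle := (@word_le Sig).

Lemma word_ltP (a b : word) :
  tlt wle b a <-> exists2 i, i < size a & b = take i a.
Proof.
rewrite /tlt /word_le; split.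
- case=> pba nba; exists (size b); last by move: pba; rewrite prefixE => /eqP.
  rewrite ltn_neqAle size_prefix // andbT.
  apply/eqP=> e; apply: nba; move: pba; rewrite prefixE e take_size.
  by move/eqP.
- case=> i lti ->; split; first exact: prefix_take.
  move=> e; move: (f_equal size e); rewrite size_takel; last exact: ltnW.
  by move=> ei; rewrite ei ltnn in lti.
Qed.

Lemma size_word_lt (a b : word) : tlt wle b a -> size b < size a.
Proof. by case/word_ltP=> i lti ->; rewrite size_takel //; apply: ltnW. Qed.

Definition strict_prefixes (a : word) := [seq take i a | i <- iota 0 (size a)].

Lemma strict_prefixesP (a : word) :
  [/\ List.NoDup (strict_prefixes a),
      forall b, tlt wle b a <-> List.In b (strict_prefixes a)
    & length (strict_prefixes a) = size a].
Proof.
split.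
- apply: uniq_NoDup; rewrite map_inj_in_uniq ?iota_uniq //.
  move=> i j; rewrite !mem_iota /= !add0n => li lj e.
  by move: (f_equal size e); rewrite !size_takel //; apply: ltnW.
- move=> b; rewrite In_mem word_ltP; split.
  + by case=> i lti ->; apply/mapP; exists i; rewrite // mem_iota.
  + by case/mapP=> i; rewrite mem_iota add0n => /andP [_ lti] ->; exists i.
- by rewrite length_size size_map size_iota.
Qed.

Lemma word_levelE (a : word) n : has_level wle a n <-> size a = n.
Proof.
have [nd sp ln] := strict_prefixesP a.
split; last by move=> <-; exists (strict_prefixes a).
case=> l [ndl [spl <-]]; rewrite -ln; apply/eqP; rewrite eqn_leq.
by apply/andP; split; apply/leP; apply: List.NoDup_incl_length => // b;
  [move/sp/spl | move/spl/sp].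
Qed.

Lemma word_imm_succE (a b : word) : imm_succ wle a b <-> exists c, b = rcons a c.
Proof.
split.
- case=> tab nmid; have sab := size_word_lt tab.
  have /hasP [c _ _] : has predT b by rewrite has_predT; apply: leq_ltn_trans sab.
  have ea : take (size a) b = a by case: tab; rewrite /word_le prefixE => /eqP.
  exists (nth c b (size a)); rewrite -{1}ea -take_nth //.
  case: (eqVneq (take (size a).+1 b) b) => [//|ne]; exfalso; apply: nmid.
  exists (take (size a).+1 b); split; last by split; [exact: prefix_take|exact/eqP].
  split; first by rewrite /word_le prefixE take_takel // ea.
  by move/(f_equal size); rewrite size_takel //; lia.
- case=> c ->; split.
  + split; first exact: prefix_rcons.
    by move/(f_equal size); rewrite size_rcons; lia.
  + by case=> d [/size_word_lt h1 /size_word_lt]; rewrite size_rcons; lia.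
Qed.

Lemma word_is_S_tree : is_S_tree wle (@word_S Sig).
Proof.
split; [|split; [|split; [|split; [|split; [|split]]]]].
- split; [|split; [|split; [|split]]].
  + exact: prefix_refl.
  + exact: prefix_antisym.
  + by move=> a b c; apply: prefix_trans.
  + by move=> a; have [nd sp _] := strict_prefixesP a; exists (strict_prefixes a).
  + move=> a b c /word_ltP [i _ ->] /word_ltP [j _ ->].
    rewrite /word_le; case: (leqP i j) => h.
    * by left; rewrite -(take_takel a h); apply: prefix_take.
    * by right; rewrite -(take_takel a (ltnW h)); apply: prefix_take.
- by exists pickle; apply: (pcan_inj pickleK).
- move=> a; exists (map (rcons a) (enum Sig)) => b /word_imm_succE [c ->].
  by apply/In_mem/map_f; rewrite mem_enum.
- by exists [:: [::]] => -[|? ?] /word_levelE //; left.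
- by move=> a [|q p] c b //= [<-]; split=> //; apply/word_imm_succE; exists c.
- by move=> a b [|? ?] [|? ?] c d x //= [<-] [/esym/rcons_inj [-> ->]].
- by move=> a b /word_imm_succE [c ->]; exists [::], c.
Qed.

Lemma tilde_imgE (F : word -> word) k :
  tilde_img wle F k <-> exists v, size (F v) = k.
Proof.
split; first by case=> n [a [_ /word_levelE h]]; exists a.
by case=> v h; exists (size v), v; split; apply/word_levelE.
Qed.

Lemma agree_uptoE i (F G : word -> word) :
  agree_upto wle i F G <-> forall a, size a <= i -> F a = G a.
Proof.
split; first by move=> h a; apply: h; apply/word_levelE.
by move=> h a n /word_levelE <-; apply: h.
Qed.

Record shape_preserving_word (F : word -> word) : Prop := ShapePreservingWord {
  shape_inj : injective F;
  shape_size : forall a b, size a = size b -> size (F a) = size (F b);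
  shape_rcons : forall a c, prefix (rcons (F a) c) (F (rcons a c)) }.

Lemma shape_preservingE F :
  shape_preserving wle (@word_S Sig) F <-> shape_preserving_word F.
Proof.
split.
- case=> inj [lp [ps _]]; split => //.
  + move=> a b e; apply/esym/(word_levelE (F b)).
    by apply: (lp a b (size a)); apply/word_levelE.
  + by move=> a c; have [b' [[<-]]] := ps a [::] c (rcons a c) erefl.
- case=> inj lp ps; split; [done|split; [|split]].
  + move=> a b n k /word_levelE ha /word_levelE hb /word_levelE hk.
    by apply/word_levelE; rewrite -hk; apply: lp; rewrite ha hb.
  + by move=> a [|? ?] c b //= [<-]; exists (rcons (F a) c); split=> //; apply: ps.
  + by move=> a b /word_levelE; case: a => // _ _; apply: prefix0s.
Qed.

End WordTree.

Section LevelMap.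
Variables (Sig : finType) (x0 : Sig).
Notation word := (seq Sig).

(* The paper's \tilde F: by [size_lvl], the word [nseq n x0] is just some word of
   length n. *)
Definition lvl (F : word -> word) n := size (F (nseq n x0)).

Variable F : word -> word.
Hypothesis spF : shape_preserving_word F.

Lemma size_lvl a : size (F a) = lvl F (size a).
Proof. by apply: shape_size; rewrite ?size_nseq. Qed.

Lemma lvl_ltS n : lvl F n < lvl F n.+1.
Proof.
have := size_prefix (shape_rcons spF (nseq n x0) x0).
by rewrite size_rcons !size_lvl size_rcons size_nseq.
Qed.

Lemma lvl_homo : {homo lvl F : m n / m < n}.
Proof. exact: homo_ltn ltn_trans lvl_ltS. Qed.

Lemma lvl_leq : {mono lvl F : m n / m <= n}.
Proof. exact: leq_mono lvl_homo. Qed.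

Lemma lvl_ltn : {mono lvl F : m n / m < n}.
Proof. by move=> m n; rewrite !ltnNge lvl_leq. Qed.

Lemma lvl_inj m n : lvl F m = lvl F n -> m = n.
Proof. exact: (incn_inj lvl_leq). Qed.

Lemma leq_lvl n : n <= lvl F n.
Proof. by elim: n => // n IH; apply: leq_ltn_trans IH (lvl_ltS n). Qed.

Lemma shape_prefix a b : prefix a b -> prefix (F a) (F b).
Proof.
case/prefixP=> s ->; elim/last_ind: s => [|s c IH]; first by rewrite cats0 prefix_refl.
rewrite -rcons_cat; apply: prefix_trans IH _.
by apply: prefix_trans (shape_rcons spF _ c); apply: prefix_rcons.
Qed.

Lemma take_shape k a : k <= size a -> take (lvl F k) (F a) = F (take k a).
Proof.
move=> h; have := shape_prefix (prefix_take a k).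
by rewrite prefixE size_lvl size_takel // => /eqP.
Qed.

Lemma nth_shape k a : k < size a -> nth x0 (F a) (lvl F k) = nth x0 a k.
Proof.
move=> h; have p1 := shape_prefix (prefix_take a k.+1).
rewrite (take_nth x0 h) in p1.
have p2 := prefix_trans (shape_rcons spF (take k a) (nth x0 a k)) p1.
rewrite (prefix_nth x0 p2); last by rewrite size_rcons size_lvl size_takel ?(ltnW h).
by rewrite nth_rcons size_lvl size_takel ?(ltnW h) // ltnn eqxx.
Qed.

End LevelMap.

Section BoringWords.
Variables (Sig : finType) (x0 : Sig).
Notation word := (seq Sig).
Notation wle := (@word_le Sig).
Variable E : forall n, (n.-tuple Sig -> Sig) -> Prop.
Hypothesis hE : boring_ext E.

Definition tuple_of n (s : word) : n.-tuple Sig := insubd (nseq_tuple n x0) s.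

Lemma tuple_ofK n s : size s = n -> val (tuple_of n s) = s.
Proof. by move=> h; rewrite val_insubd /= h eqxx. Qed.

Definition boring n (g : word -> Sig) :=
  exists e : n.-tuple Sig -> Sig, E e /\ forall t, g (val t) = e t.

Lemma boring_nth m n : m < n -> boring n (fun s => nth x0 s m).
Proof.
move=> h; exists (fun a => tnth a (Ordinal h)); split; first exact: hE.1.
by move=> t; rewrite (tnth_nth x0).
Qed.

Lemma boring_subst m n g1 g2 : m <= n -> boring m g1 -> boring n g2 ->
  exists g3, boring n.+1 g3 /\ forall a b, size a = m -> size b = n - m ->
    g3 (a ++ g1 a :: b) = g2 (a ++ b).
Proof.
move=> mn [e1 [E1 h1]] [e2 [E2 h2]].
have [e3 [E3 h3]] := hE.2 m n e1 e2 mn E1 E2.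
exists (fun s => e3 (tuple_of n.+1 s)); split.
  by exists e3; split => // t; rewrite /tuple_of valKd.
move=> a b sa sb.
have ea : val (tuple_of m a) = a := tuple_ofK sa.
have eb : val (tuple_of (n - m) b) = b := tuple_ofK sb.
have et : val (tuple_of n.+1 (a ++ g1 a :: b)) = a ++ g1 a :: b.
  by apply: tuple_ofK; rewrite size_cat /= sa sb; lia.
have et' : val (tuple_of n (a ++ b)) = a ++ b.
  by apply: tuple_ofK; rewrite size_cat sa sb; lia.
rewrite -et' h2; apply: (h3 (tuple_of m a) (tuple_of (n - m) b)).
  by rewrite et ea eb -h1 ea.
by rewrite et' ea eb.
Qed.

Definition level_skipped (F : word -> word) l := forall v, size (F v) <> l.

Definition boring_level (F : word -> word) l := exists g, boring l g /\
  forall v, l < size (F v) -> nth x0 (F v) l = g (take l (F v)).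

Lemma M_E_char F : M_E E F <->
  shape_preserving_word F /\ forall l, level_skipped F l -> boring_level F l.
Proof.
rewrite /M_E shape_preservingE; split.
- case=> sp hi; split => // l nl.
  have : ~ interesting E (fun w => exists v, w = F v) l.
    by move/hi/tilde_imgE => [v /nl].
  move/Classical_Prop.NNPP => [e [El he]].
  exists (fun s => e (tuple_of l s)); split.
    by exists e; split => // t; rewrite /tuple_of valKd.
  move=> v lt; have tK := tuple_ofK (size_takel (ltnW lt)).
  have := he (F v) (ex_intro _ v erefl) (ltnW lt) _ tK.
  by rewrite tK (prefix_rcons_take_nth x0) // => /eqP.
- case=> sp hb; split => // l; rewrite tilde_imgE; split.
  + move=> hint; apply: Classical_Prop.NNPP => nt; apply: hint.
    have nl : level_skipped F l by move=> v e; apply: nt; exists v.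
    have [g [[e [El he]] hg]] := hb l nl; exists e; split => //.
    move=> a [v ->] la t et.
    have lt : l < size (F v) by rewrite ltn_neqAle la andbT; apply/eqP/nesym/nl.
    by rewrite -he et -(hg v lt) (prefix_rcons_take_nth x0).
  + case=> a ha [e [El he]].
    have tK : val (tuple_of l (F a)) = take l (F a) by rewrite tuple_ofK // -ha take_size.
    have := he (F a) (ex_intro _ a erefl) (eq_leq (esym ha)) _ tK.
    by rewrite tuple_ofK // => /size_prefix; rewrite size_rcons ha ltnn.
Qed.

Definition insert_at m (g : word -> Sig) (w : word) :=
  if size w < m then w else take m w ++ g (take m w) :: drop m w.

Lemma size_insert_at m g w :
  size (insert_at m g w) = if size w < m then size w else (size w).+1.
Proof.
rewrite /insert_at; case: ifP => h //.
by rewrite size_cat /= size_drop size_takel; [lia | rewrite leqNgt h].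
Qed.

Lemma insert_at_shape m g : shape_preserving_word (insert_at m g).
Proof.
split.
- move=> u w e.
  have su : size u = size w.
    by move: (f_equal size e); rewrite !size_insert_at; case: ifP; case: ifP; lia.
  move: e; rewrite /insert_at su; case: ifP => h // /eqP.
  rewrite eqseq_cat; last by rewrite !size_takel // leqNgt ?su h.
  case/andP=> /eqP e1 /eqP [_ e2].
  by rewrite -(cat_take_drop m u) -(cat_take_drop m w) e1 e2.
- by move=> a b e; rewrite !size_insert_at e.
- move=> a c; rewrite /insert_at size_rcons; case: (ltnP (size a) m) => h.
  + case: (ltnP (size a).+1 m) => h2; first exact: prefix_refl.
    by rewrite take_oversize ?size_rcons //; apply: prefix_prefix.
  + rewrite ltnNge (leqW h) /= take_rcons_le // drop_rcons // rcons_cat.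
    exact: prefix_refl.
Qed.

Lemma insert_at_hits m g l : l <> m -> exists v, size (insert_at m g v) = l.
Proof.
move=> lm; case: (ltngtP l m) => hl //.
- by exists (nseq l x0); rewrite size_insert_at size_nseq hl.
- exists (nseq l.-1 x0); rewrite size_insert_at size_nseq ifF; first lia.
  by apply/negbTE; rewrite -leqNgt; lia.
Qed.

Lemma insert_at_skips_only m g : skips_only wle (insert_at m g) m.
Proof.
move=> k; rewrite tilde_imgE; split; last exact: insert_at_hits.
by case=> v <-; rewrite size_insert_at; case: ifP; lia.
Qed.

Lemma insert_at_M_E m g : boring m g -> M_E E (insert_at m g).
Proof.
move=> Eg; apply/M_E_char; split; first exact: insert_at_shape.
move=> l nl; have -> : l = m.
  by apply/eqP/negPn/negP => /eqP/(insert_at_hits g) [v /nl].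
exists g; split => // v; rewrite size_insert_at /insert_at.
case: ifP => [h lt|h _]; first by rewrite ltnNge (ltnW lt) in h.
have st : size (take m v) = m by rewrite size_takel // leqNgt h.
by rewrite nth_cat st ltnn subnn /= take_size_cat.
Qed.

Lemma M_E_id : M_E E id.
Proof.
apply/M_E_char; split; first by split => // a c; apply: prefix_refl.
by move=> l /(_ (nseq l x0)); rewrite size_nseq.
Qed.

Section Pullback.
Variable F : word -> word.
Hypothesis spF : shape_preserving_word F.
Hypothesis bF : forall l, level_skipped F l -> boring_level F l.
Variables (k : nat) (g' : word -> Sig).

Definition pullback_stage j i := [/\ i <= k,
  forall i', (lvl x0 F i' < j) = (i' < i) &
  exists g, boring (j + (k - i)) g /\
    forall u, size u = k -> g (take j (F u) ++ drop i u) = g' u].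

Lemma pullback_stageS j i : j < lvl x0 F k -> pullback_stage j i ->
  exists i', pullback_stage j.+1 i'.
Proof.
move=> jk [ik hlvl [g [Eg hg]]].
have ju u : size u = k -> j < size (F u) by move=> su; rewrite (size_lvl x0) // su.
have take_succ u : size u = k ->
    take j.+1 (F u) = rcons (take j (F u)) (nth x0 (F u) j).
  by move=> su; rewrite (take_nth x0) ?ju.
case: (eqVneq (lvl x0 F i) j) => [ej|nej].
- have ik' : i < k by rewrite -(lvl_ltn x0 spF) ej.
  exists i.+1; split => //.
  + by move=> i'; rewrite ltnS -ej (lvl_leq x0 spF).
  + exists g; rewrite (_ : j.+1 + _ = j + (k - i)); last by lia.
    split => // u su; rewrite take_succ // -{2}ej (nth_shape x0 spF) ?su //.
    by rewrite cat_rcons -drop_nth ?su // hg.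
- have skj : level_skipped F j.
    move=> v; rewrite (size_lvl x0 spF) => e.
    have iv : i <= size v by rewrite leqNgt -hlvl e ltnn.
    move: (hlvl i); rewrite ltnn => /negbT; rewrite -leqNgt => ji.
    by move: nej; rewrite eqn_leq ji andbT -e (lvl_leq x0 spF) iv.
  have [gj [Egj hgj]] := bF skj.
  have [g3 [Eg3 hg3]] := boring_subst (leq_addr (k - i) j) Egj Eg.
  exists i; split => //.
  + move=> i'; rewrite ltnS leq_eqVlt hlvl.
    suff /negbTE -> : lvl x0 F i' != j by [].
    by apply/eqP => e; apply: (skj (nseq i' x0)); rewrite (size_lvl x0 spF) size_nseq.
  + exists g3; rewrite addSn; split => // u su.
    rewrite take_succ // cat_rcons (hgj u (ju u su)) hg3 ?hg //.
      by rewrite size_takel // ltnW ?ju.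
    by rewrite size_drop su; lia.
Qed.

Lemma boring_pullback : boring k g' ->
  exists g, boring (lvl x0 F k) g /\ forall u, size u = k -> g (F u) = g' u.
Proof.
move=> Eg'.
have stages j : j <= lvl x0 F k -> exists i, pullback_stage j i.
  elim: j => [_|j IH hj].
    exists 0; split => //; exists g'; rewrite add0n subn0; split => // u _.
    by rewrite take0 drop0.
  by have [i st] := IH (ltnW hj); apply: pullback_stageS st.
have [i [ik hlvl [g [Eg hg]]]] := stages _ (leqnn _).
have ek : i = k.
  move: (hlvl i); rewrite ltnn (lvl_ltn x0 spF) => /negbT; rewrite -leqNgt => ki.
  by apply/eqP; rewrite eqn_leq ik ki.
subst i; rewrite subnn addn0 in Eg; exists g; split => // u su.
rewrite -(hg u su) take_oversize ?drop_oversize ?su ?cats0 //.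
by rewrite (size_lvl x0 spF) su.
Qed.

End Pullback.

Lemma M_E_comp F G : M_E E F -> M_E E G -> M_E E (F \o G).
Proof.
move=> /M_E_char [spF bF] /M_E_char [spG bG]; apply/M_E_char; split.
- split; first exact: inj_comp (shape_inj spF) (shape_inj spG).
  + by move=> a b e; apply: (shape_size spF); apply: (shape_size spG).
  + move=> a c /=; apply: prefix_trans (shape_rcons spF (G a) c) _.
    exact/(shape_prefix spF)/(shape_rcons spG).
- move=> l nl; case: (Classical_Prop.classic (exists w, size (F w) = l)) => [[w hw]|nw].
  + have nG : level_skipped G (size w).
      by move=> v e; apply: (nl v); rewrite /= (size_lvl x0 spF) e -(size_lvl x0 spF).
    have [g' [Eg' hg']] := bG _ nG.
    have [g [Eg hg]] := boring_pullback spF bF Eg'.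
    rewrite (size_lvl x0 spF) in hw; subst l.
    exists g; split => // v /=; rewrite (size_lvl x0 spF) (lvl_ltn x0 spF) => lt.
    rewrite (nth_shape x0 spF lt) (hg' v lt) -hg ?size_takel ?(ltnW lt) //.
    by rewrite (take_shape x0 spF (ltnW lt)).
  + have [g [Eg hg]] := bF l (fun w e => nw (ex_intro _ w e)).
    by exists g; split => // v /=; apply: hg.
Qed.

Definition diag_map (Fs : nat -> word -> word) (a : word) := Fs (size a) a.

Section Limit.
Variable Fs : nat -> word -> word.
Hypothesis hFs : forall i, M_E E (Fs i).
Hypothesis hag : forall i, agree_upto wle i (Fs i) (Fs i.+1).

Let spFs i : shape_preserving_word (Fs i) := ((M_E_char (Fs i)).1 (hFs i)).1.

Lemma Fs_stable i j a : i <= j -> size a <= i -> Fs i a = Fs j a.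
Proof.
move=> ij sa; rewrite -(subnKC ij); elim: (j - i) => [|d IH]; first by rewrite addn0.
rewrite IH addnS; apply/(agree_uptoE _ _ _).1 => //.
exact: leq_trans sa (leq_addr _ _).
Qed.

Lemma size_diag_map a n : size a <= n -> size (diag_map Fs a) = lvl x0 (Fs n) (size a).
Proof. by move=> an; rewrite /diag_map (Fs_stable an) ?(size_lvl x0 (spFs n)). Qed.

Lemma diag_map_shape : shape_preserving_word (diag_map Fs).
Proof.
split.
- move=> a b e; pose n := maxn (size a) (size b).
  have es : size a = size b.
    apply: (lvl_inj (x0:=x0) (spFs n)).
    by rewrite -!size_diag_map ?e ?leq_maxl ?leq_maxr.
  by move: e; rewrite /diag_map es; apply: shape_inj.
- by move=> a b e; rewrite /diag_map e; apply: shape_size.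
- move=> a c; rewrite /diag_map size_rcons (Fs_stable (leqnSn (size a))) //.
  exact: shape_rcons.
Qed.

Lemma diag_map_boring l : level_skipped (diag_map Fs) l -> boring_level (diag_map Fs) l.
Proof.
move=> nl; pose m := l.+1.
have Fm_diag w : size w <= m -> Fs m w = diag_map Fs w.
  by move=> wm; rewrite /diag_map (Fs_stable wm).
have lt_lvl : l < lvl x0 (Fs m) m by apply: leq_lvl.
have nm : level_skipped (Fs m) l.
  move=> w; case: (leqP (size w) m) => hw; first by rewrite Fm_diag //; apply: nl.
  by rewrite (size_lvl x0 (spFs m)); have := lvl_homo x0 (spFs m) hw; lia.
have [g [Eg hg]] := ((M_E_char (Fs m)).1 (hFs m)).2 l nm.
exists g; split => // v lt.
case: (leqP (size v) m) => hv; first by rewrite -Fm_diag // hg // Fm_diag.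
pose u := take m v.
have su : size u = m by rewrite size_takel // ltnW.
have pu : prefix (Fs m u) (diag_map Fs v).
  rewrite /diag_map (Fs_stable (ltnW hv)) ?su //.
  exact/(shape_prefix (spFs _))/prefix_take.
have lu : l < size (Fs m u) by rewrite (size_lvl x0 (spFs m)) su.
have [<- <-] := prefix_common x0 (prefix_refl (Fs m u)) pu lu.
exact: hg.
Qed.

Lemma M_E_limit : M_E E (diag_map Fs).
Proof. by apply/M_E_char; split; [apply: diag_map_shape | apply: diag_map_boring]. Qed.

Lemma diag_map_agree i : agree_upto wle i (diag_map Fs) (Fs i).
Proof. by apply/agree_uptoE => a ai; apply: Fs_stable. Qed.

End Limit.

Lemma M_E_M3 n m : n < m -> exists F, M_E E F /\ skips_only wle F m /\
  forall a b p c x, has_level wle a n -> has_level wle b m ->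
    word_S a p c = Some x -> wle x b -> word_S b p c = Some (F b).
Proof.
move=> nm; exists (insert_at m (fun s => nth x0 s n)).
split; first exact/insert_at_M_E/boring_nth.
split; first exact: insert_at_skips_only.
move=> a b [|? ?] c x /word_levelE ha /word_levelE hb //= [<-] pb.
rewrite /insert_at hb ltnn take_oversize ?hb // drop_oversize ?hb // cats1.
by rewrite (prefix_nth x0 pb) ?size_rcons ?ha // nth_rcons ha ltnn eqxx.
Qed.

Definition delete_at k (w : word) := take k w ++ drop k.+1 w.

Lemma delete_at_small k w : size w <= k -> delete_at k w = w.
Proof.
by move=> h; rewrite /delete_at take_oversize // drop_oversize ?cats0 //; lia.
Qed.

Lemma size_delete_at k w : k < size w -> size (delete_at k w) = (size w).-1.
Proof.
by move=> h; rewrite /delete_at size_cat size_drop size_takel; [lia|exact: ltnW].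
Qed.

Lemma size_delete_at_le k w : size (delete_at k w) <= size w.
Proof.
by rewrite /delete_at size_cat size_drop size_take; case: (ltnP k (size w)); lia.
Qed.

Lemma prefix_delete_at k u w : prefix u w -> size u <= k -> prefix u (delete_at k w).
Proof.
move=> pu su; apply: prefix_catl.
by move: pu; rewrite !prefixE take_takel.
Qed.

Lemma insert_at_delete_at k g w : k < size w -> nth x0 w k = g (take k w) ->
  insert_at k g (delete_at k w) = w.
Proof.
move=> kw hw; have st : size (take k w) = k by rewrite size_takel // ltnW.
rewrite /insert_at /delete_at size_cat st size_drop ltnNge leq_addr /=.
by rewrite take_size_cat // drop_size_cat // -hw -(drop_nth x0 kw) cat_take_drop.
Qed.

Section LowerFactor.
Variables (F : word -> word) (n k : nat) (g : word -> Sig).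
Hypothesis spF : shape_preserving_word F.
Hypothesis bF : forall l, level_skipped F l -> boring_level F l.
Hypothesis lvl_n : lvl x0 F n = k.+1.
Hypothesis skF : level_skipped F k.
Hypothesis hg : forall v, k < size (F v) -> nth x0 (F v) k = g (take k (F v)).

Definition lower_factor v :=
  if size v <= n then delete_at k (F v) else delete_at k (F (take n v)) ++ drop n v.

Lemma lvl_lt_skipped i : i < n -> lvl x0 F i < k.
Proof.
move=> i_n; have := lvl_homo x0 spF i_n; rewrite lvl_n ltnS leq_eqVlt.
case/orP=> // /eqP e; case: (skF (v:=nseq i x0)).
by rewrite (size_lvl x0 spF) size_nseq.
Qed.

Lemma insert_at_delete_at_F v : insert_at k g (delete_at k (F v)) = F v.
Proof.
case: (ltngtP (size (F v)) k) => hv; last by case: (skF hv).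
- by rewrite delete_at_small ?(ltnW hv) // /insert_at hv.
- exact: insert_at_delete_at (hg hv).
Qed.

Lemma size_delete_at_F w : size w = n -> size (delete_at k (F w)) = k.
Proof. by move=> wn; rewrite size_delete_at (size_lvl x0 spF) wn lvl_n. Qed.

Lemma lower_factor_small v : size v < n -> lower_factor v = F v.
Proof.
move=> vn; rewrite /lower_factor (ltnW vn) delete_at_small //.
by rewrite (size_lvl x0 spF); apply/ltnW/lvl_lt_skipped.
Qed.

Lemma size_lower_factor v : size (lower_factor v) =
  if size v < n then lvl x0 F (size v) else k + (size v - n).
Proof.
case: ifPn => [vn|]; first by rewrite lower_factor_small // (size_lvl x0 spF).
rewrite -leqNgt /lower_factor => nv; case: ifPn => [vn|].
  have e : size v = n by apply/eqP; rewrite eqn_leq vn nv.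
  by rewrite size_delete_at_F // e subnn addn0.
rewrite -ltnNge => vn.
by rewrite size_cat size_delete_at_F ?size_drop // size_takel // ltnW.
Qed.

Lemma lower_factor_size_inj a b :
  size (lower_factor a) = size (lower_factor b) -> size a = size b.
Proof.
rewrite !size_lower_factor.
case: (ltnP (size a) n) => ha; case: (ltnP (size b) n) => hb.
- exact: lvl_inj.
- by have := lvl_lt_skipped ha; lia.
- by have := lvl_lt_skipped hb; lia.
- by lia.
Qed.

Lemma lower_factor_inj : injective lower_factor.
Proof.
move=> a b e; have es := lower_factor_size_inj (f_equal size e).
have recover u w : delete_at k (F u) = delete_at k (F w) -> u = w.
  by move=> /(f_equal (insert_at k g)); rewrite !insert_at_delete_at_F => /(shape_inj spF).
move: e; rewrite /lower_factor -es; case: ifPn => [_ /recover //|].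
rewrite -ltnNge => an /eqP; rewrite eqseq_cat; last first.
  by rewrite !size_delete_at_F // size_takel ?es // ltnW // -es.
case/andP=> /eqP /recover e1 /eqP e2.
by rewrite -(cat_take_drop n a) -(cat_take_drop n b) e1 e2.
Qed.

Lemma lower_factor_shape : shape_preserving_word lower_factor.
Proof.
split; first exact: lower_factor_inj.
  by move=> a b e; rewrite !size_lower_factor e.
move=> a c; case: (ltngtP (size a) n) => an.
- rewrite lower_factor_small // /lower_factor size_rcons an.
  apply: prefix_delete_at; first exact: shape_rcons.
  by rewrite size_rcons (size_lvl x0 spF); apply: lvl_lt_skipped.
- have [h1 h2] : (size a <= n) = false /\ ((size a).+1 <= n) = false.
    by split; apply/negbTE; rewrite -ltnNge // ltnS ltnW.
  rewrite /lower_factor size_rcons h1 h2 take_rcons_le ?(ltnW an) //.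
  by rewrite drop_rcons ?(ltnW an) // rcons_cat prefix_refl.
- rewrite /lower_factor size_rcons an leqnn ltnn /= -an.
  by rewrite take_rcons_le // take_size drop_rcons // drop_size cats1 prefix_refl.
Qed.

Lemma lower_factor_boring l :
  level_skipped lower_factor l -> boring_level lower_factor l.
Proof.
move=> nl.
have lk : l < k.
  rewrite ltnNge; apply/negP => kl; apply: (nl (nseq (n + (l - k)) x0)).
  by rewrite size_lower_factor size_nseq ltnNge leq_addr /=; lia.
have nF : level_skipped F l.
  move=> v; case: (ltnP (size v) n) => vn.
    by rewrite -lower_factor_small //; apply: nl.
  rewrite (size_lvl x0 spF); have := (lvl_leq x0 spF n (size v)); rewrite vn lvl_n.
  by lia.
have [gl [Egl hgl]] := bF nF; exists gl; split => // v lt.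
suff [w pw lw] : exists2 w, prefix (take l.+1 (F w)) (lower_factor v) & l < size (F w).
  have sl : l < size (take l.+1 (F w)) by rewrite size_takel.
  have [<- <-] := prefix_common x0 (prefix_take (F w) l.+1) pw sl.
  exact: hgl.
rewrite /lower_factor; case: ifPn => vn.
- exists v; last first.
    by have := size_delete_at_le k (F v); move: lt; rewrite /lower_factor vn; lia.
  by apply: prefix_delete_at; rewrite ?prefix_take ?size_take_min //; lia.
- exists (take n v); last by rewrite (size_lvl x0 spF) size_takel ?lvl_n; lia.
  apply/prefix_catl/prefix_delete_at; rewrite ?prefix_take ?size_take_min //; lia.
Qed.

Lemma M_E_lower_factor : M_E E lower_factor.
Proof.
by apply/M_E_char; split; [apply: lower_factor_shape | apply: lower_factor_boring].
Qed.

Lemma insert_at_lower_factor v : size v <= n -> insert_at k g (lower_factor v) = F v.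
Proof. by move=> vn; rewrite /lower_factor vn insert_at_delete_at_F. Qed.

End LowerFactor.

Lemma M_E_M2 n F k : M_E E F -> tilde wle F n k -> 0 < k -> skips wle F (k - 1) ->
  exists F1 F2, M_E E F1 /\ M_E E F2 /\ skips_only wle F2 (k - 1) /\
    agree_upto wle n (F2 \o F1) F.
Proof.
move=> hF [a [/word_levelE ha /word_levelE hk]] k0 sk.
have [spF bF] := (M_E_char F).1 hF.
case: k k0 hk sk => // k _ hk sk; rewrite subSS subn0 in sk *.
have skF : level_skipped F k by move=> v e; apply: sk; apply/tilde_imgE; exists v.
have lvl_n : lvl x0 F n = k.+1 by rewrite -ha -(size_lvl x0 spF) hk.
have [g [Eg hg]] := bF k skF.
exists (lower_factor F n k), (insert_at k g); split; [|split; [|split]].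
- exact: M_E_lower_factor spF bF lvl_n skF hg.
- exact: insert_at_M_E.
- exact: insert_at_skips_only.
- by apply/agree_uptoE => v vn; apply: insert_at_lower_factor.
Qed.

End BoringWords.

Theorem mainTheorem12 (Sig : finType) (hne : 0 < #|Sig|)
    (E : forall n, (n.-tuple Sig -> Sig) -> Prop) (hE : boring_ext E) :
  is_SM_tree (@word_le Sig) (@word_S Sig) (M_E E).
Proof.
case/card_gt0P: hne => x0 _.
split; first exact: word_is_S_tree.
split; first by move=> F [].
split; [split; [exact: (M_E_id x0)|split]|split].
- exact: (M_E_comp x0 hE).
- move=> Fs hFs hag; exists (diag_map Fs).
  by split; [exact: (M_E_limit x0) | exact: diag_map_agree].
- move=> n F k; exact: (M_E_M2 x0).
- move=> n m; exact: (M_E_M3 x0 hE).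
Qed.
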